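(* Let $(E,\mathscr{T},\le)$ be a $T_2$-preordered Tychonoff space such that the quotient $(E/\!\sim,\mathscr{T}/\!\sim,\lesssim)$ is a completely regularly ordered space. Then the preorder $\le$ is represented by the continuous isotone functions on $E$, i.e. $G(\le)=\bigcap_{f\in\mathcal{F}}G_f$ with $\mathcal{F}$ the family of continuous isotone $f:E\to[0,1]$. Let $\beta:E\to(\beta E,\mathscr{T}_\beta,\le_\beta)$ be the Stone–Čech compactification with the preorder $G(\le_\beta)=\bigcap_{f\in\mathcal{F}}G_{\tilde f}$, $\tilde f$ the unique continuous extension of $f\circ\beta^{-1}$ to $\beta E$; let $\sim_\beta$ be the equivalence ($x\le_\beta y$ and $y\le_\beta x$) and $\Pi:\beta E\to\beta E/\!\sim_\beta$ the quotient projection onto the $T_2$-ordered space $(\beta E/\!\sim_\beta,\mathscr{T}_\beta/\!\sim_\beta,\lesssim_\beta)$, and $\pi:E\to E/\!\sim$ the quotient projection. Then $\varphi:=\Pi\circ\beta\circ\pi^{-1}:E/\!\sim\,\to\beta E/\!\sim_\beta$ is a well-defined map, it is a $T_2$-order compactification of $E/\!\sim$ equivalent to the Nachbin $T_2$-order compactification $n:E/\!\sim\,\to n(E/\!\sim)$, and $\varphi\circ\pi=\Pi\circ\beta$.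
   Context: A topological preordered space $(E,\mathscr{T},\le)$ is $T_2$-preordered if $G(\le)=\{(x,y):x\le y\}$ is closed in $E\times E$; $T_2$-ordered if moreover $\le$ is antisymmetric. Isotone: $x\le y\Rightarrow f(x)\le f(y)$; $G_f=\{(x,y):f(x)\le f(y)\}$. For a preorder $\le$, $x\sim y$ means $x\le y$ and $y\le x$; $E/\!\sim$ carries the quotient topology and the order $[x]\lesssim[y]$ iff $x\le y$. A topological ordered space is completely regularly ordered if its topology is the initial topology of its continuous isotone functions into $[0,1]$ and $x\le y$ iff $f(x)\le f(y)$ for all such $f$. A preorder embedding is a continuous isotone injective map which is a homeomorphism onto its image with isotone inverse (image with induced preorder); a ($T_2$-order) compactification of an ordered space $X$ is a preorder embedding with dense image into a compact Hausdorff $T_2$-ordered space. $c_1\le c_2$ means there is a continuous isotone $C:c_2X\to c_1X$ with $C\circ c_2=c_1$; equivalent means both $c_1\le c_2$ and $c_2\le c_1$. The Nachbin $T_2$-order compactification of a completely regularly ordered space $X$ is the (unique up to equivalence) $T_2$-order compactification $n:X\to nX$ such that every continuous isotone function $X\to[0,1]$ extends to a continuous isotone function on $nX$. *)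

From HB Require Import structures.
From mathcomp Require Import all_boot all_order all_algebra generic_quotient.
From mathcomp Require Import all_classical all_reals topology.
Set Implicit Arguments. Unset Strict Implicit. Unset Printing Implicit Defensive.
Import Order.TTheory GRing.Theory Num.Theory numFieldTopology.Exports.
Local Open Scope classical_set_scope.
Local Open Scope ring_scope.

Record preorder (T : Type) := Preorder {
  ple :> T -> T -> Prop;
  ple_refl : forall x, ple x x;
  ple_trans : forall x y z, ple x y -> ple y z -> ple x z }.

Section Quot.
Context {T : choiceType} (P : preorder T).

Definition peqv : rel T := fun x y => `[< P x y /\ P y x >].

Lemma peqv_refl : reflexive peqv.
Proof. by move=> x; apply/asboolP; split; apply: ple_refl. Qed.

Lemma peqv_sym : symmetric peqv.
Proof.
by move=> x y; apply/asboolP/asboolP => -[h1 h2]; split.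
Qed.

Lemma peqv_trans : transitive peqv.
Proof.
move=> y x z /asboolP[h1 h2] /asboolP[h3 h4]; apply/asboolP.
by split; apply: ple_trans; eauto.
Qed.

Canonical peqv_equiv := EquivRel peqv peqv_refl peqv_sym peqv_trans.
End Quot.

Notation pquot P := (quotient_topology {eq_quot (peqv P)}%qT).

Definition qproj {T : topologicalType} (P : preorder T) : T -> pquot P :=
  fun x => (\pi_(pquot P) x)%qT.

Definition qle {T : topologicalType} (P : preorder T) (a b : pquot P) : Prop :=
  P (repr a) (repr b).

Section Defs.
Context (R : realType).

Definition isotone {X Y : Type} (leX : X -> X -> Prop) (leY : Y -> Y -> Prop)
  (f : X -> Y) := forall x y, leX x y -> leY (f x) (f y).

Definition cont_iso01 {X : topologicalType} (leX : X -> X -> Prop) (f : X -> R) :=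
  continuous f /\ (forall x, 0 <= f x <= 1) /\ isotone leX (fun a b : R => a <= b) f.

Definition T2_preordered {X : topologicalType} (leX : X -> X -> Prop) :=
  closed [set p : X * X | leX p.1 p.2].

Definition T2_ordered {X : topologicalType} (leX : X -> X -> Prop) :=
  [/\ (forall x, leX x x), (forall x y z, leX x y -> leX y z -> leX x z),
      (forall x y, leX x y -> leX y x -> x = y) & T2_preordered leX].

Definition completely_regular (X : topologicalType) :=
  forall (A : set X) (x : X), closed A -> ~ A x ->
    exists f : X -> R, [/\ continuous f, (forall y, 0 <= f y <= 1),
                           f x = 0 & (forall y, A y -> f y = 1)].

Definition tychonoff_space (X : topologicalType) :=
  completely_regular X /\ hausdorff_space X.

(* completely regularly ordered: the topology is the initial topology of the
   continuous isotone functions into [0,1] (every neighbourhood of a point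
   contains a finite intersection of preimages of open sets by such
   functions), and x <= y iff f x <= f y for all such f. *)
Definition completely_regularly_ordered {X : topologicalType}
    (leX : X -> X -> Prop) :=
  (forall (U : set X) (x : X), open U -> U x ->
     exists n (f : 'I_n -> X -> R) (V : 'I_n -> set R),
       (forall i, [/\ cont_iso01 leX (f i), open (V i) & V i (f i x)]) /\
       \bigcap_(i in [set: 'I_n]) (f i @^-1` V i) `<=` U) /\
  (forall x y, leX x y <-> (forall f, cont_iso01 leX f -> f x <= f y)).

Definition embedding_onto_image {X Y : topologicalType} (f : X -> Y) :=
  forall U : set X, open U -> exists V : set Y, open V /\ f @` U = range f `&` V.

Definition preorder_embedding {X Y : topologicalType}
    (leX : X -> X -> Prop) (leY : Y -> Y -> Prop) (f : X -> Y) :=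
  [/\ continuous f, isotone leX leY f, injective f, embedding_onto_image f
    & (forall x y, leY (f x) (f y) -> leX x y)].

Definition T2_order_compactification {X Y : topologicalType}
    (leX : X -> X -> Prop) (leY : Y -> Y -> Prop) (c : X -> Y) :=
  [/\ preorder_embedding leX leY c, dense (range c), compact [set: Y],
      hausdorff_space Y & T2_ordered leY].

Definition compactification_le {X Y1 Y2 : topologicalType}
    (leY1 : Y1 -> Y1 -> Prop) (leY2 : Y2 -> Y2 -> Prop)
    (c1 : X -> Y1) (c2 : X -> Y2) :=
  exists C : Y2 -> Y1, [/\ continuous C, isotone leY2 leY1 C & C \o c2 = c1].

Definition compactification_equiv {X Y1 Y2 : topologicalType}
    (leY1 : Y1 -> Y1 -> Prop) (leY2 : Y2 -> Y2 -> Prop)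
    (c1 : X -> Y1) (c2 : X -> Y2) :=
  compactification_le leY1 leY2 c1 c2 /\ compactification_le leY2 leY1 c2 c1.

Definition nachbin_compactification {X Y : topologicalType}
    (leX : X -> X -> Prop) (leY : Y -> Y -> Prop) (n : X -> Y) :=
  T2_order_compactification leX leY n /\
  (forall f : X -> R, cont_iso01 leX f ->
     exists g : Y -> R, cont_iso01 leY g /\ g \o n = f).

(* Stone-Cech compactification of a Tychonoff space E (characterized up to
   homeomorphism by: compact Hausdorff, dense embedding, and every continuous
   E -> [0,1] extends continuously). *)
Definition stone_cech {E B : topologicalType} (b : E -> B) :=
  [/\ [/\ continuous b, injective b & embedding_onto_image b], dense (range b),
      compact [set: B], hausdorff_space B &
      (forall f : E -> R, continuous f -> (forall x, 0 <= f x <= 1) ->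
         exists g : B -> R, continuous g /\ g \o b = f)].

Definition beta_le {E B : topologicalType} (leE : E -> E -> Prop) (b : E -> B)
    (x y : B) : Prop :=
  forall f : E -> R, cont_iso01 leE f ->
    forall g : B -> R, continuous g -> g \o b = f -> g x <= g y.

Lemma beta_le_refl {E B : topologicalType} (leE : E -> E -> Prop) (b : E -> B) x :
  beta_le leE b x x.
Proof. by move=> f _ g _ _; exact: lexx. Qed.

Lemma beta_le_trans {E B : topologicalType} (leE : E -> E -> Prop) (b : E -> B)
  x y z : beta_le leE b x y -> beta_le leE b y z -> beta_le leE b x z.
Proof.
move=> h1 h2 f hf g hg hgb; exact: le_trans (h1 f hf g hg hgb) (h2 f hf g hg hgb).
Qed.

Definition beta_pre {E B : topologicalType} (leE : E -> E -> Prop) (b : E -> B) :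
  preorder B := Preorder (@beta_le_refl E B leE b) (@beta_le_trans E B leE b).

End Defs.

(* The preorder of E is the pull-back of the order of E/~, and the latter is
   represented by its continuous isotone functions into [0,1]; composing them
   with the projection gives the first claim.  Each such f extends to a
   continuous f~ on the Stone-Cech compactification, and the extensions
   represent <=_beta by definition.  Hence beta reflects the preorder, phi is
   a well-defined order embedding, and the extensions descend to continuous
   functions on beta E/~_beta that separate its points and its order, so the
   quotient is a compact Hausdorff T2-ordered space.

   The comparison with a Nachbin compactification n uses one extension
   principle twice: if the points of a compact space Z are separated by
   continuous real functions v_i, and each v_i composed with a map d : W -> Z
   factors as u_i o c with u_i continuous on Y and c of dense range, then d
   factors continuously through c.  For the map into n, the separating family
   is given by Nachbin's ordered Urysohn lemma, obtained by the dyadic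
   construction with open and closed decreasing sets. *)
From HB Require Import structures.
From mathcomp Require Import all_boot all_order all_algebra generic_quotient.
From mathcomp Require Import all_classical all_reals topology normedtype.
From mathcomp Require Import zify lra.
Import Order.TTheory GRing.Theory Num.Theory numFieldTopology.Exports.
Import numFieldNormedType.Exports.
Local Open Scope classical_set_scope.
Local Open Scope ring_scope.

(** * Maps into compact spaces separated by real functions *)

Lemma nbhs_preimage_open (Y Z : topologicalType) (f : Y -> Z) (A : set Z) x :
  continuous f -> open A -> A (f x) -> nbhs x (f @^-1` A).
Proof. by move=> fc oA Afx; apply: fc; apply: open_nbhs_nbhs. Qed.

Lemma dense_nbhs_meet {Y : topologicalType} {S A : set Y} {y : Y} :
  dense S -> nbhs y A -> exists2 x, S x & A x.
Proof.
move=> dS; rewrite nbhsE => -[B [oB By] BA].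
have [x [Bx Sx]] := dS B (ex_intro _ y By) oB.
by exists x => //; apply: BA.
Qed.

Section RealFunctions.
Context {R : realType}.

Lemma near_neq {Y Z : topologicalType} {u : Y -> R} {v : Z -> R} {y z} :
  continuous u -> continuous v -> v z != u y ->
  \forall z' \near z & y' \near y, v z' != u y'.
Proof.
move=> uc vc vu.
have := @Rhausdorff R; rewrite open_hausdorff => /(_ _ _ vu) [[A B]] /=.
rewrite !inE => -[Av Bu] [oA oB /eqP AB0].
exists (v @^-1` A, u @^-1` B) => /=; first by split; apply: nbhs_preimage_open.
case=> z' y' /= [Az' By']; apply/eqP => e.
have : (A `&` B) (v z') by split => //; rewrite e.
by move/eqP: AB0 => ->.
Qed.

Lemma near_lt {Y Z : topologicalType} {u : Y -> R} {v : Z -> R} {y z} :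
  continuous u -> continuous v -> u y < v z ->
  \forall z' \near z & y' \near y, u y' < v z'.
Proof.
move=> uc vc lt; pose m := (u y + v z) / 2.
have hv : nbhs z (v @^-1` [set x | m < x]).
  by apply: nbhs_preimage_open => //; rewrite /= /m; lra.
have hu : nbhs y (u @^-1` [set x | x < m]).
  by apply: nbhs_preimage_open => //; rewrite /= /m; lra.
exists (v @^-1` [set x | m < x], u @^-1` [set x | x < m]) => //=.
by case=> z' y' /= [h1 h2]; lra.
Qed.

Lemma hausdorff_separating (Z : topologicalType) (I : Type) (v : I -> Z -> R) :
  (forall i, continuous (v i)) ->
  (forall z z', (forall i, v i z = v i z') -> z = z') -> hausdorff_space Z.
Proof.
move=> vc sep p q cl; apply: (sep p q) => i; apply: Rhausdorff.
move=> A B HA HB.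
have [z [Az Bz]] := cl _ _ (vc i p A HA) (vc i q B HB).
by exists (v i z).
Qed.

Section SeparatingExtension.
Variables (W : Type) (Y Z : topologicalType) (I : Type).
Variables (u : I -> Y -> R) (v : I -> Z -> R) (c : W -> Y) (d : W -> Z).
Hypotheses (cZ : compact [set: Z]) (uc : forall i, continuous (u i))
  (vc : forall i, continuous (v i)).
Hypothesis separating : forall z z', (forall i, v i z = v i z') -> z = z'.
Hypotheses (dc : dense (range c)) (ucd : forall i w, u i (c w) = v i (d w)).

Lemma compact_near_neq {K : set Z} {y : Y} : compact K ->
  (forall z, K z -> exists i, v i z != u i y) ->
  \forall y' \near y, forall z, K z -> exists i, v i z != u i y'.
Proof.
move=> cK H; have := (iffLR (compact_near_coveringP K) cK) Y (nbhs y)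
  (fun y' z => exists i, v i z != u i y') _.
apply; move=> z /H [i ne]; apply: filterS (near_neq (uc i) (vc i) ne).
by case=> z' y' /= h; exists i.
Qed.

Lemma separating_lift_ex y : exists z, forall i, v i z = u i y.
Proof.
apply: contrapT => /forallNP noz.
have neq z : [set: Z] z -> exists i, v i z != u i y.
  by move=> _; have /existsNP [i ne] := noz z; exists i; exact/eqP.
have /(dense_nbhs_meet dc) [_ [w _ <-]] := compact_near_neq cZ neq.
by move=> /(_ (d w) Logic.I) [i]; rewrite ucd eqxx.
Qed.

(* For continuity at y: the compact complement of an open neighbourhood of
   C y is separated from y, and by compactness this persists near y. *)
Lemma separating_extension : exists C : Y -> Z,
  [/\ continuous C, (forall i y, v i (C y) = u i y) & (forall w, C (c w) = d w)].
Proof.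
have [C HC] := choice separating_lift_ex.
exists C; split => //; last by move=> w; apply: separating => i; rewrite HC ucd.
move=> y A /=; rewrite nbhsE => -[B [oB By] BA].
have cK : compact (~` B) := subclosed_compact (open_closedC oB) cZ (@subsetT _ _).
have neq z : (~` B) z -> exists i, v i z != u i y.
  move=> nBz; apply: contrapT => /forallNP H.
  apply: nBz; suff -> : z = C y by [].
  by apply: separating => i; rewrite HC; apply/eqP/negPn/negP; exact: H.
suff : \forall y' \near y, A (C y') by [].
apply: filterS (compact_near_neq cK neq) => y' H' /=.
by apply: BA; apply: contrapT => /H' [i]; rewrite HC eqxx.
Qed.

End SeparatingExtension.
End RealFunctions.

(** * Compact T2-ordered spaces and the ordered Urysohn lemma *)

Definition decreasing {Y : Type} (le : Y -> Y -> Prop) (S : set Y) :=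
  forall x y, le x y -> S y -> S x.

Definition up_closure {Y : Type} (le : Y -> Y -> Prop) (K : set Y) :=
  [set x | exists2 k, K k & le k x].

Definition down_closure {Y : Type} (le : Y -> Y -> Prop) (K : set Y) :=
  [set x | exists2 k, K k & le x k].

Definition closed_open_decreasing {Y : topologicalType} (le : Y -> Y -> Prop)
    (A W : set Y) :=
  [/\ closed A, decreasing le A, open W, decreasing le W & A `<=` W].

Definition interpolates {Y : topologicalType} (le : Y -> Y -> Prop)
    (A W V D : set Y) :=
  [/\ open V /\ decreasing le V, closed D /\ decreasing le D,
      A `<=` V, V `<=` D & D `<=` W].

Lemma closed_up_closure (Y : topologicalType) (r : Y -> Y -> Prop) (K : set Y) :
  compact [set: Y] -> closed [set p : Y * Y | r p.1 p.2] -> closed K ->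
  closed (up_closure r K).
Proof.
move=> cY gc cK; rewrite -[X in closed X]setCK; apply: open_closedC.
rewrite openE => x /= nx.
have cpK : compact K := subclosed_compact cK cY (@subsetT _ K).
have := (iffLR (compact_near_coveringP K) cpK) Y (nbhs x) (fun x' k => ~ r k x') _.
have H : forall k, K k -> \forall k' \near k & x' \near x, ~ r k' x'.
  move=> k Kk; have := closed_openC gc; rewrite openE => /(_ (k, x)) H.
  have /H Hn : ~ r k x by move=> h; apply: nx; exists k.
  by apply: filterS Hn; case.
move=> /(_ _ H) Hx; apply: filterS Hx => x' H' [k Kk rk].
exact: H' k Kk rk.
Qed.

Lemma closed_graph_flip (Y : topologicalType) (r : Y -> Y -> Prop) :
  closed [set p : Y * Y | r p.1 p.2] -> closed [set p : Y * Y | r p.2 p.1].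
Proof.
move=> gc.
have -> : [set p : Y * Y | r p.2 p.1] = unstable.swap @^-1` [set p | r p.1 p.2].
  by rewrite predeqE => -[].
by apply: preimage_closed => // p _; exact: swap_continuous.
Qed.

Section CompactOrdered.
Variables (Y : topologicalType) (le : Y -> Y -> Prop).
Hypotheses (cY : compact [set: Y]) (hY : hausdorff_space Y) (oY : T2_ordered le).

Let le_refl : forall x, le x x. Proof. by case: oY. Qed.
Let le_trans : forall x y z, le x y -> le y z -> le x z. Proof. by case: oY. Qed.
Let graph_closed : closed [set p : Y * Y | le p.1 p.2]. Proof. by case: oY. Qed.

Lemma closed_up_closure_le K : closed K -> closed (up_closure le K).
Proof. exact: closed_up_closure. Qed.

Lemma closed_down_closure_le K : closed K -> closed (down_closure le K).
Proof.
move=> cK; apply: (@closed_up_closure Y (fun a b => le b a)) => //.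
exact: closed_graph_flip.
Qed.

Lemma decreasing_interpolation A W : closed_open_decreasing le A W ->
  exists V D, interpolates le A W V D.
Proof.
move=> [cA dA oW dW AW].
have : set_nbhs A W.
  by move=> x Ax; apply: open_nbhs_nbhs; split => //; apply: AW.
move=> /(compact_normal hY cY cA) [O AO clOW].
exists (~` up_closure le (~` O°)), (down_closure le (closure O)); split.
- split.
    by apply/closed_openC/closed_up_closure_le/open_closedC/open_interior.
  by move=> x y lexy ny [k nk lekx]; apply: ny; exists k => //; exact: le_trans lekx lexy.
- split; first exact/closed_down_closure_le/closed_closure.
  by move=> x y lexy [c Oc leyc]; exists c => //; exact: le_trans lexy leyc.
- by move=> a Aa [k nk leka]; apply: nk; apply: AO; exact: dA leka Aa.
- move=> x nx; exists x; last exact: le_refl.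
  apply: subset_closure; apply: interior_subset.
  by apply: contrapT => h; apply: nx; exists x => //; exact: le_refl.
- by move=> x [c Oc lexc]; apply: dW lexc _; exact: clOW.
Qed.

End CompactOrdered.
Arguments closed_up_closure_le {Y le}.
Arguments closed_down_closure_le {Y le}.
Arguments decreasing_interpolation {Y le}.

Lemma odd_half_lt {n j} : odd j -> (j <= 2 ^ n.+1)%N -> (j./2 < 2 ^ n)%N.
Proof. by move=> oj; have := odd_double_half j; rewrite oj expnS; lia. Qed.

Lemma half_le {n j} : (j <= 2 ^ n.+1)%N -> (j./2 <= 2 ^ n)%N.
Proof. by have := odd_double_half j; rewrite expnS; case: (odd j) => /=; lia. Qed.

Lemma even_half_lt {n j} : ~~ odd j -> (j < 2 ^ n.+1)%N -> (j./2 < 2 ^ n)%N.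
Proof. by move=> /negbTE oj; have := odd_double_half j; rewrite oj expnS; lia. Qed.

Section OrderedUrysohn.
Variables (R : realType) (Y : topologicalType) (le : Y -> Y -> Prop).
Hypotheses (cY : compact [set: Y]) (hY : hausdorff_space Y) (oY : T2_ordered le).
Variables (A W : set Y).
Hypothesis AW : closed_open_decreasing le A W.

Lemma interpolant_ex (KO : set Y * set Y) : exists VD : set Y * set Y,
  closed_open_decreasing le KO.1 KO.2 -> interpolates le KO.1 KO.2 VD.1 VD.2.
Proof.
case: (pselect (closed_open_decreasing le KO.1 KO.2)) => [h|nh].
  by have [V [D hVD]] := decreasing_interpolation cY hY oY _ _ h; exists (V, D).
by exists (set0, set0).
Qed.

Definition interpolant := projT1 (choice interpolant_ex).

Lemma interpolantP {K O} : closed_open_decreasing le K O ->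
  interpolates le K O (interpolant (K, O)).1 (interpolant (K, O)).2.
Proof. exact: (projT2 (choice interpolant_ex) (K, O)). Qed.

(* [dopen n k] and [dclosed n k] stand for the sets U_(k/2^n) and a closed
   decreasing set between U_(k/2^n) and U_((k+1)/2^n); level n.+1 keeps the
   even indices of level n and interpolates at the odd ones. *)
Fixpoint dyadic n : (nat -> set Y) * (nat -> set Y) :=
  match n with
  | 0 => (fun k => if k == 0%N then (interpolant (A, W)).1 else W,
          fun _ => (interpolant (A, W)).2)
  | n'.+1 => let L := dyadic n' in
    let I j := interpolant (L.2 j./2, L.1 j./2.+1) in
    (fun j => if odd j then (I j).1 else L.1 j./2,
     fun j => if odd j then (I j).2 else L.2 j./2)
  end.

Definition dopen n := (dyadic n).1.
Definition dclosed n := (dyadic n).2.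

Lemma dopenS n j : dopen n.+1 j =
  if odd j then (interpolant (dclosed n j./2, dopen n j./2.+1)).1
  else dopen n j./2.
Proof. by []. Qed.

Lemma dclosedS n j : dclosed n.+1 j =
  if odd j then (interpolant (dclosed n j./2, dopen n j./2.+1)).2
  else dclosed n j./2.
Proof. by []. Qed.

Lemma dopen_n0 n : dopen n 0 = (interpolant (A, W)).1.
Proof. by elim: n => // n IH; rewrite dopenS. Qed.

Lemma dyadicP n :
  [/\ forall k, (k <= 2 ^ n)%N -> open (dopen n k) /\ decreasing le (dopen n k),
      forall k, (k < 2 ^ n)%N ->
        closed_open_decreasing le (dclosed n k) (dopen n k.+1) /\
        dopen n k `<=` dclosed n k
    & dopen n (2 ^ n) = W].
Proof.
have [[oV0 dV0] [cD0 dD0] AV0 V0D0 D0W] := interpolantP AW.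
have [_ _ oW dW _] := AW.
elim: n => [|n [IHo IHk IHw]].
  split => //.
  - by case=> [|[|k]] //= _; rewrite /dopen /=.
  - by case=> [|k] //= _; rewrite /dopen /dclosed /=.
have step j : (j./2 < 2 ^ n)%N -> interpolates le (dclosed n j./2)
    (dopen n j./2.+1) (interpolant (dclosed n j./2, dopen n j./2.+1)).1
    (interpolant (dclosed n j./2, dopen n j./2.+1)).2.
  by move=> /IHk[h _]; exact: interpolantP.
split.
- move=> j hj; rewrite dopenS; case: (boolP (odd j)) => oj.
    by have [] := step j (odd_half_lt oj hj).
  exact/IHo/half_le.
- move=> j hj; rewrite !dclosedS !dopenS.
  case: (boolP (odd j)) => oj; rewrite /= uphalf_half.
    have [[cK dK oO dO KO] _] := IHk _ (odd_half_lt oj (ltnW hj)).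
    have [_ [cD dD] _ VD DO] := step j (odd_half_lt oj (ltnW hj)).
    by rewrite oj add1n.
  have [[cK dK oO dO KO] OK] := IHk _ (even_half_lt oj hj).
  have [[oV dV] _ KV _ _] := step j (even_half_lt oj hj).
  by rewrite (negbTE oj) add0n.
- by rewrite dopenS expnS mul2n odd_double doubleK.
Qed.

Lemma dopen_open n k : (k <= 2 ^ n)%N -> open (dopen n k).
Proof. by move=> kn; have [h _ _] := dyadicP n; have [] := h k kn. Qed.

Lemma dopen_decreasing n k : (k <= 2 ^ n)%N -> decreasing le (dopen n k).
Proof. by move=> kn; have [h _ _] := dyadicP n; have [] := h k kn. Qed.

Lemma dclosed_closed {n k} : (k < 2 ^ n)%N -> closed (dclosed n k).
Proof. by move=> kn; have [_ h _] := dyadicP n; have [[]] := h k kn. Qed.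

Lemma dopen_sub_dclosed {n k} : (k < 2 ^ n)%N -> dopen n k `<=` dclosed n k.
Proof. by move=> kn; have [_ h _] := dyadicP n; have [] := h k kn. Qed.

Lemma dclosed_sub_dopenS {n k} : (k < 2 ^ n)%N -> dclosed n k `<=` dopen n k.+1.
Proof. by move=> kn; have [_ h _] := dyadicP n; have [[]] := h k kn. Qed.

Lemma dopen_mono n k j : (k <= j <= 2 ^ n)%N -> dopen n k `<=` dopen n j.
Proof.
elim: j => [|j IH] /andP[kj jn]; first by move: kj; rewrite leqn0 => /eqP ->.
move: kj; rewrite leq_eqVlt => /orP[/eqP -> //|kj] x Okx.
apply/dclosed_sub_dopenS/dopen_sub_dclosed => //; apply: IH Okx.
by rewrite -ltnS kj ltnW.
Qed.

Lemma dopen_sub_dclosed_le n k j : (k <= j < 2 ^ n)%N ->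
  dopen n k `<=` dclosed n j.
Proof.
move=> /andP[kj jn] x Ox; apply: dopen_sub_dclosed => //.
by apply: (@dopen_mono n k j) Ox; rewrite kj ltnW.
Qed.

Lemma dopen_lift m n k : dopen (m + n) (k * 2 ^ m) = dopen n k.
Proof.
elim: m => [|m IH]; first by rewrite expn0 muln1.
by rewrite addSn dopenS expnS mulnCA mul2n odd_double doubleK.
Qed.

Lemma dclosed_lift m n k : dclosed (m + n) (k * 2 ^ m) = dclosed n k.
Proof.
elim: m => [|m IH]; first by rewrite expn0 muln1.
by rewrite addSn dclosedS expnS mulnCA mul2n odd_double doubleK.
Qed.

Lemma sub_dopen0 n : A `<=` dopen n 0.
Proof. by rewrite dopen_n0; have [_ _ AV _ _] := interpolantP AW. Qed.

Definition dyadic_bounds (x : Y) : set R := [set r |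
  (exists n k, [/\ (k <= 2 ^ n)%N, dopen n k x & r = k%:R / (2 ^ n)%:R])
  \/ r = 1].

Definition urysohn (x : Y) : R := inf (dyadic_bounds x).

Lemma dyadic_bounds_ge0 x r : dyadic_bounds x r -> 0 <= r.
Proof. by case=> [[n [k [_ _ ->]]]|->] //; rewrite divr_ge0. Qed.

Lemma dyadic_bounds_lb x : has_lbound (dyadic_bounds x).
Proof. by exists 0 => r /dyadic_bounds_ge0. Qed.

Lemma dyadic_bounds_n0 x : dyadic_bounds x !=set0.
Proof. by exists 1; right. Qed.

Lemma urysohn_le {n k x} : (k <= 2 ^ n)%N -> dopen n k x ->
  urysohn x <= k%:R / (2 ^ n)%:R.
Proof.
by move=> kn Ox; apply: ge_inf (dyadic_bounds_lb x) _ _; left; exists n, k.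
Qed.

Lemma urysohn_le1 x : urysohn x <= 1.
Proof. by apply: ge_inf (dyadic_bounds_lb x) _ _; right. Qed.

Lemma urysohn_ge0 x : 0 <= urysohn x.
Proof. by apply: lb_le_inf (dyadic_bounds_n0 x) _ => r /dyadic_bounds_ge0. Qed.

Lemma ltr_frac (j a k b : nat) : (0 < a)%N -> (0 < b)%N ->
  j%:R / a%:R < k%:R / b%:R :> R -> (j * b < k * a)%N.
Proof.
move=> a0 b0; rewrite -(ltr_nat R) !natrM.
by rewrite ltr_pdivrMr ?ltr0n // mulrAC ltr_pdivlMr ?ltr0n.
Qed.

(* Dyadic indices of different levels are compared at the common level m + n. *)
Lemma urysohn_ge {n k x} : (k < 2 ^ n)%N -> ~ dclosed n k x ->
  k%:R / (2 ^ n)%:R <= urysohn x.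
Proof.
move=> kn nK; apply: lb_le_inf (dyadic_bounds_n0 x) _ => r [[m [j [jm Ox ->]]]|->].
  rewrite leNgt; apply/negP => /ltr_frac => /(_ (expn_gt0 _ _) (expn_gt0 _ _)) lt.
  apply: nK; rewrite -(dclosed_lift m n k).
  have := @dopen_sub_dclosed_le (m + n) (j * 2 ^ n) (k * 2 ^ m).
  rewrite addnC dopen_lift => h; apply: h Ox.
  by rewrite (ltnW lt) /= expnD ltn_pmul2r // expn_gt0.
by rewrite ler_pdivrMr ?ltr0n ?expn_gt0 // mul1r ler_nat ltnW.
Qed.

Lemma urysohn_isotone : isotone le (fun a b => a <= b) urysohn.
Proof.
move=> x y lexy; apply: lb_le_inf (dyadic_bounds_n0 y) _ => r Sr.
apply: ge_inf (dyadic_bounds_lb x) _ _.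
case: Sr => [[n [k [kn Oy ->]]]|->]; last by right.
by left; exists n, k; split => //; exact: dopen_decreasing kn _ _ lexy Oy.
Qed.

Lemma urysohn_eq0 a : A a -> urysohn a = 0.
Proof.
move=> Aa; apply/eqP; rewrite eq_le urysohn_ge0 andbT.
by have := @urysohn_le 0 0 a isT (@sub_dopen0 0 a Aa); rewrite mul0r.
Qed.

Lemma urysohn_eq1 x : ~ W x -> urysohn x = 1.
Proof.
move=> nW; apply/eqP; rewrite eq_le urysohn_le1 /=.
apply: lb_le_inf (dyadic_bounds_n0 x) _ => r [[n [k [kn Ox ->]]]|->] //.
have [_ _ eW] := dyadicP n.
by exfalso; apply: nW; rewrite -eW; apply: (@dopen_mono n k (2 ^ n)) Ox; rewrite kn leqnn.
Qed.

Lemma urysohn_near_lt x {d} : 0 < d -> \forall z \near x, urysohn z < urysohn x + d.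
Proof.
move=> d0.
have [r Sr rlt] := inf_adherent d0 (conj (dyadic_bounds_n0 x) (dyadic_bounds_lb x)).
case: Sr rlt => [[m [j [jm Ox ->]]]|->] rlt.
  have : nbhs x (dopen m j) by apply: open_nbhs_nbhs; split => //; exact: dopen_open.
  by apply: filterS => z Oz; apply: le_lt_trans rlt; exact: urysohn_le.
by apply: nearW => z; apply: le_lt_trans rlt; exact: urysohn_le1.
Qed.

(* With t = 2^n * urysohn x and m = floor t, the closed set of index m - 2
   misses x and its complement is a neighbourhood of x on which
   urysohn >= (m - 2) / 2^n > urysohn x - 3 / 2^n. *)
Lemma urysohn_near_gt x n :
  \forall z \near x, urysohn x - 3 / (2 ^ n)%:R < urysohn z.
Proof.
pose p : R := (2 ^ n)%:R.
have p0 : 0 < p by rewrite ltr0n expn_gt0.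
have pV : p * p^-1 = 1 by rewrite mulfV // gt_eqF.
rewrite -/p; case: (ltP (urysohn x) (3 / p)) => [lt3|ge3].
  by apply: nearW => z; apply: lt_le_trans (urysohn_ge0 z); lra.
pose t := urysohn x * p.
have t3 : 3 <= t by rewrite /t -ler_pdivrMr.
have t0 : 0 <= t by apply: le_trans t3.
have tp : t <= p by rewrite /t ler_piMl ?urysohn_le1 // ltW.
pose m := Num.truncn t.
have tm : t < m.+1%:R by rewrite truncnS_gt.
have m3 : (3 <= m)%N by rewrite truncn_ge_nat.
have mt : m%:R <= t by rewrite truncn_le.
pose k := (m - 2)%N.
have ek : k.+1%:R = m%:R - 1 :> R.
  by rewrite -natr1 natrB ?(leq_trans _ m3) //; lra.
have ek' : k%:R = m%:R - 2 :> R by rewrite natrB ?(leq_trans _ m3).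
have kn : (k < 2 ^ n)%N by rewrite -(ltr_nat R) -/p ek'; lra.
have nK : ~ dclosed n k x.
  move=> /(dclosed_sub_dopenS kn)/(urysohn_le kn).
  by rewrite ler_pdivlMr -/p // -/t ek; lra.
have : nbhs x (~` dclosed n k).
  by apply: open_nbhs_nbhs; split => //; exact/closed_openC/dclosed_closed.
apply: filterS => z nKz; apply: lt_le_trans (urysohn_ge kn nKz).
rewrite ltr_pdivlMr -/p // mulrBl -mulrA [p^-1 * p]mulrC pV mulr1.
by rewrite -/t ek'; move: tm; rewrite -natr1; lra.
Qed.

Lemma urysohn_continuous : continuous urysohn.
Proof.
move=> x; apply/cvgrPdist_lt => e e0.
pose n := (Num.truncn (3 / e)).+1; pose p : R := (2 ^ n)%:R.
have p0 : 0 < p by rewrite ltr0n expn_gt0.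
have pe : 3 / p < e.
  have h1 : 3 / e < n%:R by rewrite /n truncnS_gt.
  have h2 : n%:R <= p by rewrite ler_nat ltnW // ltn_expl.
  by rewrite ltr_pdivrMr // mulrC -ltr_pdivrMr //; exact: lt_le_trans h1 h2.
have d0 : 0 < 3 / p by rewrite divr_gt0.
apply: filterS (filterI (urysohn_near_lt x d0) (urysohn_near_gt x n)).
by move=> z [h1 h2]; rewrite ltr_norml; apply/andP; split; lra.
Qed.

Lemma ordered_urysohn : exists g : Y -> R,
  [/\ cont_iso01 le g, forall a, A a -> g a = 0 & forall x, ~ W x -> g x = 1].
Proof.
exists urysohn; split; [split | exact: urysohn_eq0 | exact: urysohn_eq1].
  exact: urysohn_continuous.
by split; [move=> z; rewrite urysohn_ge0 urysohn_le1 | exact: urysohn_isotone].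
Qed.

End OrderedUrysohn.

Lemma T2_ordered_separation (R : realType) {Y : topologicalType}
    {le : Y -> Y -> Prop} :
  compact [set: Y] -> hausdorff_space Y -> T2_ordered le ->
  forall y y', ~ le y y' -> exists g : Y -> R, cont_iso01 le g /\ g y' < g y.
Proof.
move=> cY hY oY y y' nle.
have [le_refl le_trans _ _] := oY.
have closed1 (z : Y) : closed [set z].
  exact/accessible_closed_set1/hausdorff_accessible.
pose A := down_closure le [set y']; pose W := ~` up_closure le [set y].
have AW : closed_open_decreasing le A W.
  split.
  - exact: closed_down_closure_le.
  - by move=> a c lac [k -> lck]; exists y' => //; exact: le_trans lac lck.
  - exact/closed_openC/closed_up_closure_le.
  - by move=> a c lac Wc [k -> lka]; apply: Wc; exists y => //; exact: le_trans lka lac.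
  - by move=> a [k -> lak] [k' -> lka]; apply: nle; exact: le_trans lka lak.
have [g [gi g0 g1]] := @ordered_urysohn R _ _ cY hY oY A W AW.
exists g; split => //.
by rewrite g0 ?g1 ?ltr01 //; [move=> -[]; exists y | exists y'].
Qed.

(** * Quotients by a preorder *)

Section Quotient.
Context {T : topologicalType} {P : preorder T}.

Lemma qproj_eq x y : qproj P x = qproj P y <-> P x y /\ P y x.
Proof.
split => [h|h]; last by apply/(@eqquotP _ _ {eq_quot (peqv P)}%qT); exact/asboolP.
have : peqv P x y by apply/(@eqquotP _ _ {eq_quot (peqv P)}%qT); exact: h.
by move/asboolP.
Qed.

Lemma qprojK (q : pquot P) : qproj P (repr q) = q.
Proof. exact: reprK. Qed.

Lemma repr_qproj x : P (repr (qproj P x)) x /\ P x (repr (qproj P x)).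
Proof. by apply/qproj_eq; rewrite qprojK. Qed.

Lemma qle_qproj x y : qle (qproj P x) (qproj P y) <-> P x y.
Proof.
have [h1 h2] := repr_qproj x; have [h3 h4] := repr_qproj y.
rewrite /qle; split => h; first exact: ple_trans (ple_trans h2 h) h3.
exact: ple_trans (ple_trans h1 h) h4.
Qed.

Lemma qle_antisym (a c : pquot P) : qle a c -> qle c a -> a = c.
Proof. by move=> h1 h2; rewrite -(qprojK a) -(qprojK c); apply/qproj_eq. Qed.

Lemma qproj_continuous : continuous (qproj P).
Proof. exact: pi_continuous. Qed.

Definition qlift {Z : Type} (g : T -> Z) (q : pquot P) : Z := g (repr q).

Lemma qlift_qproj {Z : Type} (g : T -> Z) x :
  (forall x y, P x y -> P y x -> g x = g y) -> qlift g (qproj P x) = g x.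
Proof. by move=> gr; have [h1 h2] := repr_qproj x; exact: gr. Qed.

Lemma qlift_continuous {Z : topologicalType} (g : T -> Z) : continuous g ->
  (forall x y, P x y -> P y x -> g x = g y) -> continuous (qlift g).
Proof.
move=> gc gr; apply/quotient_continuous.
suff -> : qlift g \o \pi_(pquot P)%qT = g by [].
by apply: funext => x; exact: qlift_qproj.
Qed.

End Quotient.

(** * The quotient of the Stone-Cech compactification *)

Section Representation.
Context {R : realType} {E : topologicalType} {P : preorder E}.
Hypothesis crord : completely_regularly_ordered R (@qle E P).

Lemma cont_iso01_qproj {g : pquot P -> R} : cont_iso01 (@qle E P) g ->
  cont_iso01 P (g \o qproj P).
Proof.
move=> [gc [g01 giso]]; split; last split.
- by move=> z; apply: continuous_comp; [exact: qproj_continuous | exact: gc].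
- by move=> z; exact: g01.
- by move=> a c Pac; apply: giso; apply/qle_qproj.
Qed.

Lemma represented_by_cont_iso01 x y :
  P x y <-> (forall f : E -> R, cont_iso01 P f -> f x <= f y).
Proof.
split; first by move=> Pxy f [_ [_ iso]]; exact: iso.
move=> H; apply/qle_qproj; apply/(crord.2 _ _) => g hg.
exact: (H _ (cont_iso01_qproj hg)).
Qed.

Section StoneCech.
Context {bE : topologicalType} (b : E -> bE).
Hypothesis sc : stone_cech R b.

Let Pb := beta_pre R P b.
Let b_continuous : continuous b. Proof. by have [[]] := sc. Qed.

Definition iso_extension (g : bE -> R) := continuous g /\ cont_iso01 P (g \o b).

Lemma beta_leP x y : Pb x y <-> forall g, iso_extension g -> g x <= g y.
Proof.
split; first by move=> h g [gc gi]; exact: (h _ gi g gc erefl).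
by move=> h f fi g gc gb; apply: h; split => //; rewrite gb.
Qed.

Lemma iso_extension_ex {f} : cont_iso01 P f -> exists g, iso_extension g /\ g \o b = f.
Proof.
move=> fi; have [_ _ _ _ ext] := sc; have [fc [f01 _]] := fi.
have [g [gc gb]] := ext f fc f01.
by exists g; split => //; split => //; rewrite gb.
Qed.

Lemma beta_le_image x y : Pb (b x) (b y) <-> P x y.
Proof.
split => [h|h]; last by apply/beta_leP => g [_ [_ [_ iso]]]; exact: iso x y h.
apply/represented_by_cont_iso01 => f fi; have [g [gg <-]] := iso_extension_ex fi.
exact: (beta_leP (b x) (b y)).1 h g gg.
Qed.

Lemma iso_extension_respects g : iso_extension g ->
  forall x y, Pb x y -> Pb y x -> g x = g y.
Proof.
move=> gg x y h1 h2; apply/eqP; rewrite eq_le.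
by rewrite ((beta_leP _ _).1 h1 g gg) ((beta_leP _ _).1 h2 g gg).
Qed.

Lemma qlift_iso_extension_continuous {g} : iso_extension g ->
  continuous (qlift (P := Pb) g).
Proof. by move=> gg; apply: qlift_continuous; [case: gg | exact: iso_extension_respects]. Qed.

Lemma qle_beta (a c : pquot Pb) :
  qle a c <-> forall g, iso_extension g -> qlift g a <= qlift g c.
Proof. exact: beta_leP. Qed.

Lemma beta_quot_separated (a c : pquot Pb) :
  (forall g, iso_extension g -> qlift g a = qlift g c) -> a = c.
Proof. by move=> h; apply: qle_antisym; apply/qle_beta => g gg; rewrite h. Qed.

Definition phi (q : pquot P) : pquot Pb := qproj Pb (b (repr q)).

Lemma phi_qproj x : phi (qproj P x) = qproj Pb (b x).
Proof. by have [h1 h2] := repr_qproj (P := P) x; apply/qproj_eq; split; apply/beta_le_image. Qed.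

Lemma qlift_phi {g} q : iso_extension g -> qlift g (phi q) = g (b (repr q)).
Proof. by move=> gg; rewrite /phi qlift_qproj //; exact: iso_extension_respects. Qed.

Lemma phi_comp : phi \o qproj P = qproj Pb \o b.
Proof. by apply: funext => x; exact: phi_qproj. Qed.

Lemma phi_continuous : continuous phi.
Proof.
apply/quotient_continuous; rewrite (_ : phi \o _ = qproj Pb \o b); last exact: phi_comp.
by move=> x; apply: continuous_comp; [exact: b_continuous | exact: qproj_continuous].
Qed.

Lemma phi_isotone : isotone (@qle E P) (@qle bE Pb) phi.
Proof. by move=> a c h; apply/qle_qproj/beta_le_image. Qed.

Lemma phi_reflect a c : qle (phi a) (phi c) -> qle a c.
Proof. by move=> /qle_qproj/beta_le_image. Qed.

Lemma phi_inj : injective phi.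
Proof. by move=> a c e; apply: qle_antisym; apply: phi_reflect; rewrite e; exact: ple_refl. Qed.

Lemma phi_dense : dense (range phi).
Proof.
move=> O [z Oz] oO; have [_ db _ _ _] := sc.
have ne : (\pi_(pquot Pb)%qT @^-1` O) !=set0 by exists (repr z); rewrite /= reprK.
have [w [Ow [x _ bx]]] := db _ ne oO.
by exists (phi (qproj P x)); split; [rewrite phi_qproj /qproj bx | exists (qproj P x)].
Qed.

Lemma beta_quot_compact : compact [set: pquot Pb].
Proof.
have [_ _ cb _ _] := sc.
have -> : [set: pquot Pb] = \pi_(pquot Pb)%qT @` [set: bE].
  by rewrite predeqE => z; split => // _; exists (repr z) => //; rewrite reprK.
by apply: continuous_compact => //; apply/continuous_subspaceT/pi_continuous.
Qed.

Lemma beta_quot_hausdorff : hausdorff_space (pquot Pb).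
Proof.
apply: (@hausdorff_separating R _ {g | iso_extension g} (fun i => qlift (sval i))).
  by move=> [g gg]; exact: qlift_iso_extension_continuous.
by move=> a c h; apply: beta_quot_separated => g gg; exact: (h (exist _ g gg)).
Qed.

Lemma beta_quot_T2_ordered : T2_ordered (@qle bE Pb).
Proof.
split; [move=> a; exact: ple_refl | move=> a c d; exact: ple_trans
       | move=> a c; exact: qle_antisym |].
rewrite /T2_preordered -[X in closed X]setCK; apply: open_closedC.
rewrite openE => -[a c] /= nle.
have [g [gg lt]] : exists g, iso_extension g /\ qlift g c < qlift g a.
  apply: contrapT => H; apply: nle; apply/qle_beta => g gg; rewrite leNgt.
  by apply/negP => lt; apply: H; exists g.
have gc := qlift_iso_extension_continuous gg.
have := near_lt gc gc lt; apply: filterS => -[a' c'] /= lt' le'.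
by move: lt'; rewrite ltNge ((qle_beta _ _).1 le' g gg).
Qed.

(* The image of an open U is cut out near each phi q by finitely many
   extensions, because U is a neighbourhood in the initial topology of the
   continuous isotone functions on E/~. *)
Lemma phi_embedding : embedding_onto_image phi.
Proof.
move=> U oU.
pose V := [set z : pquot Pb | exists O, nbhs z O /\ forall q, O (phi q) -> U q].
exists V; split.
  rewrite openE => z [O [nO hO]].
  move: nO; rewrite nbhsE => -[O' [oO' O'z] O'O].
  apply: filterS (open_nbhs_nbhs (conj oO' O'z)) => z' O'z'.
  by exists O'; split; [exact: open_nbhs_nbhs | move=> q /O'O; exact: hO].
rewrite predeqE => z; split; last first.
  by case=> -[q _ <-] [O [nO hO]]; exists q => //; apply: hO; exact: nbhs_singleton nO.
case=> q Uq <-; split; first by exists q.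
have [n [f [W [hf sub]]]] := crord.1 U q oU Uq.
have extf i : exists g, iso_extension g /\ g \o b = f i \o qproj P.
  by have [fi _ _] := hf i; exact: iso_extension_ex (cont_iso01_qproj fi).
have [G HG] := choice extf.
have e i q' : qlift (G i) (phi q') = f i q'.
  rewrite (qlift_phi _ (HG i).1).
  by have := congr1 (fun h => h (repr q')) (HG i).2 => /= ->; rewrite qprojK.
exists [set z : pquot Pb | forall i, W i (qlift (G i) z)]; split.
  apply: (@filter_forall _ _ (fun i z => W i (qlift (G i) z)) (nbhs (phi q)) _) => i.
  have [_ oW Wq] := hf i.
  by apply: nbhs_preimage_open (qlift_iso_extension_continuous (HG i).1) oW _; rewrite e.
by move=> q' hq'; apply: sub => i _ /=; rewrite -e.
Qed.

Lemma phi_T2_order_compactification :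
  T2_order_compactification (@qle E P) (@qle bE Pb) phi.
Proof.
split; last exact: beta_quot_T2_ordered.
- split; [exact: phi_continuous | exact: phi_isotone | exact: phi_inj
         | exact: phi_embedding | exact: phi_reflect].
- exact: phi_dense.
- exact: beta_quot_compact.
- exact: beta_quot_hausdorff.
Qed.

Section Nachbin.
Context {nX : topologicalType} {leN : nX -> nX -> Prop} {n : pquot P -> nX}.
Hypothesis nach : nachbin_compactification R (@qle E P) leN n.

(* Every iso_extension g descends to E/~ and hence extends to n(E/~); these
   extensions agree with qlift g along n and phi. *)
Lemma phi_le_nachbin : compactification_le (@qle bE Pb) leN phi n.
Proof.
have [[[nc niso _ _ _] nd _ _ _] next] := nach.
have extg (i : {g | iso_extension g}) : exists u : nX -> R,
    cont_iso01 leN u /\ u \o n = qlift (sval i) \o phi.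
  case: i => [g [gc gi]] /=; have [_ [g01 iso]] := gi.
  have e : qlift g \o phi = qlift (g \o b).
    by apply: funext => q /=; rewrite (qlift_phi _ (conj gc gi)).
  rewrite e; apply: next; split; [|split].
  - apply: qlift_continuous => [|x y h1 h2].
      by move=> x; apply: continuous_comp; [exact: b_continuous | exact: gc].
    by apply/eqP; rewrite eq_le (iso _ _ h1) (iso _ _ h2).
  - by move=> q; exact: g01.
  - by move=> a c h; exact: iso _ _ h.
have [u Hu] := choice extg.
have [C [Cc Cv Ccd]] := @separating_extension R (pquot P) nX (pquot Pb)
  {g | iso_extension g} u (fun i => qlift (sval i)) n phi beta_quot_compact
  (fun i => (Hu i).1.1) (fun i => qlift_iso_extension_continuous (svalP i))
  (fun a c h => beta_quot_separated a c (fun g gg => h (exist _ g gg))) nd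
  (fun i w => congr1 (fun h => h w) (Hu i).2).
exists C; split => //; last exact: funext.
move=> y y' lyy; apply/qle_beta => g gg.
rewrite (Cv (exist _ g gg)) (Cv (exist _ g gg)).
by have [_ [_ iso]] := (Hu (exist _ g gg)).1; exact: iso.
Qed.

(* Conversely, the continuous isotone functions on n(E/~), which by
   T2_ordered_separation represent its order, extend along phi. *)
Lemma nachbin_le_phi : compactification_le leN (@qle bE Pb) n phi.
Proof.
have [[[nc niso _ _ _] _ ncpt nhaus nT2] _] := nach.
have [_ _ lanti _] := nT2.
have extk (i : {k : nX -> R | cont_iso01 leN k}) :
    exists g, iso_extension g /\ g \o b = sval i \o n \o qproj P.
  case: i => [k [kc [k01 kiso]]] /=; apply: iso_extension_ex; apply: cont_iso01_qproj.
  split; [|split].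
  - by move=> x; apply: continuous_comp; [exact: nc | exact: kc].
  - by move=> q; exact: k01.
  - by move=> a c h; apply/kiso/niso.
have [G HG] := choice extk.
have nle z z' : (forall i : {k : nX -> R | cont_iso01 leN k}, sval i z <= sval i z') ->
    leN z z'.
  move=> h; apply: contrapT => /(T2_ordered_separation R ncpt nhaus nT2) [g [gi lt]].
  by move: (h (exist _ g gi)) => /=; rewrite leNgt lt.
have separating z z' :
    (forall i : {k : nX -> R | cont_iso01 leN k}, sval i z = sval i z') -> z = z'.
  by move=> h; apply: lanti; apply: nle => i; rewrite h.
have e i w : qlift (G i) (phi w) = sval i (n w).
  rewrite (qlift_phi _ (HG i).1).
  by have := congr1 (fun h => h (repr w)) (HG i).2 => /= ->; rewrite qprojK.
have [C [Cc Cv Ccd]] := @separating_extension R (pquot P) (pquot Pb) nX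
  {k : nX -> R | cont_iso01 leN k} (fun i => qlift (G i)) sval phi n ncpt
  (fun i => qlift_iso_extension_continuous (HG i).1) (fun i => (svalP i).1)
  separating phi_dense e.
exists C; split => //; last exact: funext.
by move=> a a' h; apply: nle => i; rewrite !Cv; exact: (qle_beta _ _).1 h (G i) (HG i).1.
Qed.

End Nachbin.
End StoneCech.
End Representation.

Theorem mainTheorem9 (R : realType) (E : topologicalType) (P : preorder E) :
  tychonoff_space R E ->
  T2_preordered P ->
  completely_regularly_ordered R (@qle E P) ->
  (forall x y : E, P x y <-> (forall f : E -> R, cont_iso01 P f -> f x <= f y)) /\
  (forall (bE : topologicalType) (b : E -> bE), stone_cech R b ->
     let Pb := beta_pre R P b in
     let phi : pquot P -> pquot Pb := fun q => qproj Pb (b (repr q)) in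
     [/\ (forall x y : E, qproj P x = qproj P y -> qproj Pb (b x) = qproj Pb (b y)),
         T2_order_compactification (@qle E P) (@qle bE Pb) phi,
         (forall (nX : topologicalType) (leN : nX -> nX -> Prop)
                 (n : pquot P -> nX),
            nachbin_compactification R (@qle E P) leN n ->
            compactification_equiv (@qle bE Pb) leN phi n) &
         phi \o qproj P = qproj Pb \o b]).
Proof.
move=> _ _ crord; split; first exact: represented_by_cont_iso01.
move=> bE b sc Pb phi0; have -> : phi0 = phi b by [].
split.
- move=> x y /qproj_eq [h1 h2].
  by apply/qproj_eq; split; apply/(beta_le_image crord b sc).
- exact (phi_T2_order_compactification crord b sc).
- move=> nX leN n nach.
  split; [exact (phi_le_nachbin b sc nach) | exact (nachbin_le_phi crord b sc nach)].
- exact (phi_comp crord b sc).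
Qed.
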